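(* In the same situation, the coefficients $\varepsilon_i$ ($i\ge a+1$) satisfy $ord(\varepsilon_i)\ge i+\min_{2\le j\le a}\{ord(\delta_j)-j\}$.
   Context: Setting: $a\ge2$, $c_i(N)\in t^i\mathbb C[[t]]$, $\delta_i\in t^{i+1}\mathbb C[[t]]$, $c_i(N+1)=c_i(N)+\delta_i$ ($2\le i\le a$), and $\delta_i'$ ($2\le i\le a$), $\varepsilon_i$ ($i>a$) are the unique elements of $\mathbb C[[t]]$ such that $s(N+1)=s-\frac1a\sum_{i=2}^a\delta_i's^{1-i}+\sum_{i>a}\varepsilon_is^{1-i}$ satisfies $s(N+1)^a+\sum_{k=2}^ac_k(N+1)s(N+1)^{a-k}=s^a+\sum_{k=2}^ac_k(N)s^{a-k}$. For $\delta\in\mathbb C[[t]]$, $ord(\delta)$ is the largest $k$ with $t^k\mid\delta$. *)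

From mathcomp Require Import all_boot all_algebra.
From mathcomp Require Import complex Rstruct.
Set Implicit Arguments. Unset Strict Implicit. Unset Printing Implicit Defensive.
Import GRing.Theory Num.Theory.
Local Open Scope ring_scope.

Definition C : numClosedFieldType := Rdefinitions.R[i].

Definition ps := nat -> C.

(* t^k divides f, i.e. f \in t^k C[[t]], i.e. ord(f) >= k
   (ord(f) = largest k with t^k | f, = +oo for f = 0). *)
Definition tdvd (k : nat) (f : ps) : Prop := forall n : nat, (n < k)%N -> f n = 0.

Definition ps_mul (f g : ps) : ps := fun n => \sum_(k < n.+1) f k * g (n - k)%N.

(* Elements of C[[t]][[x]], x = s^{-1}:  F i = coefficient of x^i = s^{-i}. *)
Definition ser := nat -> ps.

Definition ser_one : ser := fun i n => ((i == 0%N) && (n == 0%N))%:R.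
Definition ser_mul (F G : ser) : ser :=
  fun i n => \sum_(k < i.+1) ps_mul (F k) (G (i - k)%N) n.
Definition ser_pow (F : ser) (m : nat) : ser := iter m (ser_mul F) ser_one.
Definition ser_mono (c : ps) (k : nat) : ser := fun i n => if i == k then c n else 0.

(* s(N+1)/s = 1 + sum_{i>=2} e_i s^{-i}, where
   e_i = -(1/a) delta'_i for 2 <= i <= a and e_i = eps_i for i > a. *)
Definition sratio (a : nat) (delta' eps : nat -> ps) : ser :=
  fun i n => if i == 0%N then (n == 0%N)%:R
             else if i == 1%N then 0
             else if (i <= a)%N then - (a%:R)^-1 * delta' i n
             else eps i n.

(* s^{-a} (s(N+1)^a + sum_{k=2}^a c_k(N+1) s(N+1)^{a-k}) *)
Definition lhs_norm (a : nat) (c1 : nat -> ps) (u : ser) : ser :=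
  fun i n => ser_pow u a i n +
             \sum_(2 <= k < a.+1) ser_mul (ser_mono (c1 k) k) (ser_pow u (a - k)) i n.

(* s^{-a} (s^a + sum_{k=2}^a c_k(N) s^{a-k}) *)
Definition rhs_norm (a : nat) (c0 : nat -> ps) : ser :=
  fun i n => ser_one i n + \sum_(2 <= k < a.+1) ser_mono (c0 k) k i n.

(* Write u = s(N+1)/s = 1 + sum_(k >= 2) u_k s^-k, so that eps_i = u_i for i > a, and let
   m = min_j (ord delta_j - j).  We show ord u_k >= k + m for all k > 0 by strong induction.
   If this holds below k = i, then every power u^l satisfies the same bounds and
   (u^l)_i = l u_i mod t^(i+m).  Comparing the coefficients of s^-i in the defining equation,
   all the terms involving c_k(N+1) = c_k(N) + delta_k agree with those involving c_k(N)
   modulo t^(i+m), which leaves a u_i = 0 mod t^(i+m), hence ord u_i >= i + m. *)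
From mathcomp Require Import all_boot all_algebra.
From mathcomp Require Import complex Rstruct.
From mathcomp Require Import zify.
Set Implicit Arguments. Unset Strict Implicit. Unset Printing Implicit Defensive.
Import GRing.Theory Num.Theory.
Local Open Scope ring_scope.

Definition ps_eqmod (p : nat) (f g : ps) : Prop := forall n : nat, (n < p)%N -> f n = g n.

Lemma tdvdW p q f : (q <= p)%N -> tdvd p f -> tdvd q f.
Proof. by move=> hqp hf n hn; apply: hf; apply: leq_trans hn hqp. Qed.

Lemma tdvdD p f g : tdvd p f -> tdvd p g -> tdvd p (fun n => f n + g n).
Proof. by move=> hf hg n hn; rewrite hf ?hg ?addr0. Qed.

Lemma tdvd_ps_mul p q f g : tdvd p f -> tdvd q g -> tdvd (p + q) (ps_mul f g).
Proof.
move=> hf hg n hn; apply: big1 => k _.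
have [hk|hk] := ltnP k p; first by rewrite hf ?mul0r.
by rewrite hg ?mulr0 //; have := ltn_ord k; lia.
Qed.

Lemma ps_mul1l f g n : (forall p, f p = (p == 0%N)%:R) -> ps_mul f g n = g n.
Proof.
move=> f1; rewrite /ps_mul big_ord_recl f1 subn0 mul1r big1 ?addr0 // => k _.
by rewrite f1 mul0r.
Qed.

Lemma ps_mul1r f g n : (forall p, g p = (p == 0%N)%:R) -> ps_mul f g n = f n.
Proof.
move=> g1; rewrite /ps_mul big_ord_recr /= subnn g1 mulr1 big1 ?add0r // => k _.
by rewrite g1 subn_eq0 leqNgt ltn_ord mulr0.
Qed.

Lemma ser_one_coefS k n : (0 < k)%N -> ser_one k n = 0.
Proof. by move=> hk; rewrite /ser_one (negbTE (lt0n_neq0 hk)). Qed.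

Lemma ser_mul_monoE c k G i n :
  ser_mul (ser_mono c k) G i n = if (k <= i)%N then ps_mul c (G (i - k)%N) n else 0.
Proof.
have mono0 j : (j : nat) != k -> ps_mul (ser_mono c k j) (G (i - j)%N) n = 0.
  by move=> hj; apply: big1 => p _; rewrite /ser_mono (negbTE hj) mul0r.
case: leqP => hki; last first.
  by apply: big1 => j _; apply: mono0; apply: contraTneq (ltn_ord j) => ->; rewrite -leqNgt.
rewrite /ser_mul (bigD1 (Ordinal (hki : (k < i.+1)%N))) //= big1 ?addr0.
  by apply: eq_bigr => p _; rewrite /ser_mono eqxx.
by move=> j hj; apply: mono0; apply: contraNneq hj => hjk; apply/eqP/val_inj.
Qed.

Section NearOne.

Variable m : nat.

Definition near_one (i : nat) (F : ser) : Prop :=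
  (forall n : nat, F 0%N n = (n == 0%N)%:R) /\
  (forall k : nat, (0 < k < i)%N -> tdvd (k + m) (F k)).

Lemma near_one_ser_one i : near_one i ser_one.
Proof. by split=> [//|k /andP[hk _] n _]; rewrite ser_one_coefS. Qed.

Lemma ser_mul_near_one_coef i F G j : near_one i F -> near_one i G -> (0 < j <= i)%N ->
  ps_eqmod (j + m) (ser_mul F G j) (fun n => F j n + G j n).
Proof.
case=> F0 hF [G0 hG]; case: j => // j /andP[_ hji] n hn.
rewrite /ser_mul big_ord_recl big_ord_recr /= subn0 subnn ps_mul1l // ps_mul1r //.
rewrite big1 ?add0r 1?addrC // => k _; have := ltn_ord k.
rewrite /bump add1n subSS; move: (nat_of_ord k) => {}k hkj.
have hFk : tdvd (k.+1 + m) (F k.+1) by apply: hF; lia.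
have hGk : tdvd (j - k + m) (G (j - k)%N) by apply: hG; lia.
apply: (tdvdW _ (tdvd_ps_mul hFk hGk)) n hn; lia.
Qed.

Lemma near_one_ser_mul i F G : near_one i F -> near_one i G -> near_one i (ser_mul F G).
Proof.
move=> hF hG; split=> [n|k /andP[hk hki] n hn].
  by rewrite /ser_mul big_ord1 subnn (ps_mul1l _ _ hF.1) hG.1.
rewrite (ser_mul_near_one_coef hF hG) ?hk ?(ltnW hki) //.
by rewrite hF.2 ?hG.2 ?addr0 ?hk.
Qed.

Lemma ser_pow_near_one i F l : (0 < i)%N -> near_one i F ->
  near_one i (ser_pow F l) /\
  ps_eqmod (i + m) (ser_pow F l i) (fun n => l%:R * F i n).
Proof.
move=> hi hF; elim: l => [|l [hP hPi]].
  by split=> [|n _]; [exact: near_one_ser_one | rewrite /= ser_one_coefS ?mul0r].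
split; first exact: near_one_ser_mul.
move=> n hn; change (ser_mul F (ser_pow F l) i n = l.+1%:R * F i n).
rewrite (ser_mul_near_one_coef hF hP) ?hi //= hPi //.
by rewrite mulrS mulrDl mul1r.
Qed.

End NearOne.

Section DefiningEquation.

Variables (a m : nat) (c delta : nat -> ps) (u : ser).
Hypothesis a_gt0 : (0 < a)%N.
Hypothesis c_tdvd : forall k, (2 <= k <= a)%N -> tdvd k (c k).
Hypothesis delta_tdvd : forall k, (2 <= k <= a)%N -> tdvd (k + m) (delta k).
Hypothesis u_eq : forall i n,
  lhs_norm a (fun k n => c k n + delta k n) u i n = rhs_norm a c i n.

Lemma perturbed_term_eqmod i k : (0 < i)%N -> near_one m i u -> (2 <= k <= a)%N ->
  ps_eqmod (i + m)
    (ser_mul (ser_mono (fun n => c k n + delta k n) k) (ser_pow u (a - k)) i)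
    (ser_mono (c k) k i).
Proof.
move=> hi hu hk n hn; rewrite ser_mul_monoE /ser_mono.
have [hP1 hPi] := ser_pow_near_one (a - k) hi hu.
case: (ltngtP k i) => [hki|hik|ki].
- have hck : tdvd k (fun n => c k n + delta k n).
    by apply: tdvdD; [exact: c_tdvd | apply: tdvdW (delta_tdvd hk); exact: leq_addr].
  have hP : tdvd (i - k + m) (ser_pow u (a - k) (i - k)%N) by apply: hP1.2; lia.
  by apply: (tdvdW _ (tdvd_ps_mul hck hP)) n hn; lia.
- by [].
- move: hn; rewrite -ki subnn ps_mul1r => [hn|]; last exact: hP1.1.
  by rewrite (delta_tdvd hk hn) addr0.
Qed.

Lemma near_one_step i : (0 < i)%N -> near_one m i u -> tdvd (i + m) (u i).
Proof.
move=> hi hu n hn.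
have hsum : \sum_(2 <= k < a.+1)
    ser_mul (ser_mono (fun n => c k n + delta k n) k) (ser_pow u (a - k)) i n
  = \sum_(2 <= k < a.+1) ser_mono (c k) k i n.
  by apply: eq_big_nat => k hk; apply: perturbed_term_eqmod.
have := u_eq i n; rewrite /lhs_norm /rhs_norm hsum ser_one_coefS // => /addIr hpow.
have := (ser_pow_near_one a hi hu).2 n hn; rewrite hpow => /esym/eqP.
by rewrite mulf_eq0 pnatr_eq0 eqn0Ngt a_gt0 => /eqP.
Qed.

Lemma near_one_all i : (forall n, u 0%N n = (n == 0%N)%:R) -> near_one m i u.
Proof.
move=> u0; elim: i => [|i IH]; first by split=> // k; rewrite ltn0 andbF.
split=> // k /andP[hk]; rewrite ltnS leq_eqVlt => /orP[/eqP ki|hki].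
  by subst k; apply: near_one_step.
by apply: IH.2; rewrite hk.
Qed.

End DefiningEquation.

Theorem mainTheorem8 (a : nat) (cN delta delta' eps : nat -> ps) :
  (2 <= a)%N ->
  (forall i : nat, (2 <= i <= a)%N -> tdvd i (cN i)) ->
  (forall i : nat, (2 <= i <= a)%N -> tdvd i.+1 (delta i)) ->
  (forall i n : nat,
     lhs_norm a (fun k m => cN k m + delta k m) (sratio a delta' eps) i n
     = rhs_norm a cN i n) ->
  forall i : nat, (a < i)%N ->
  forall m : nat,
    (forall j : nat, (2 <= j <= a)%N -> tdvd (j + m) (delta j)) ->
    tdvd (i + m) (eps i).
Proof.
move=> a_ge2 hc _ heq i hai m hd.
have [_ hu] := near_one_all (ltnW a_ge2) hc hd heq i.+1 (fun n => erefl).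
have i_gt1 : (1 < i)%N := ltnW (leq_ltn_trans a_ge2 hai).
have hi : (0 < i < i.+1)%N by rewrite ltnSn andbT (ltnW i_gt1).
move=> n hn; have := hu i hi n hn.
by rewrite /sratio (gtn_eqF (ltnW i_gt1)) (gtn_eqF i_gt1) leqNgt hai.
Qed.
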